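(* In the Euclidean plane with coordinates $(x,y)$, $r^2=x^2+y^2$, let $V=\frac{M(y/r^2)}{r^4}$ where $M$ is an arbitrary smooth function. Then $V$ satisfies $\frac{x^2-y^2}{2}V_{,x}+xyV_{,y}+2xV=0$, and for the system $\ddot x=-V_{,x}$, $\ddot y=-V_{,y}$ restricted to zero energy $\dot x^2+\dot y^2+2V=0$, the quantity $$I=\frac{x^2-y^2}{2}\dot x+xy\dot y$$ is a first integral. Moreover, every zero-energy solution with $I=0$ (and $r\neq0$) lies on a circle $r=c_1\cos\theta$, i.e. $(x-\tfrac{c_1}{2})^2+y^2=\tfrac{c_1^2}{4}$ for some constant $c_1\ne0$, and along it $\theta(t)$ satisfies $t-t_0=c_1^3\int\frac{\cos^2\theta\,d\theta}{\sqrt{-2M(\tan\theta/c_1)}}$.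
   Context: Polar coordinates $x=r\cos\theta$, $y=r\sin\theta$. A first integral of the constrained system is a function whose time derivative vanishes along every solution satisfying the zero-energy constraint. *)

From Stdlib Require Import Reals.
From Coquelicot Require Import Coquelicot.
Open Scope R_scope.

Definition smooth (M : R -> R) : Prop := forall (n : nat) (u : R), ex_derive_n M n u.

Definition r2 (x y : R) : R := x ^ 2 + y ^ 2.

Definition V (M : R -> R) (x y : R) : R := M (y / r2 x y) / (r2 x y) ^ 2.

Definition dVx (M : R -> R) (x y : R) : R := Derive (fun u => V M u y) x.
Definition dVy (M : R -> R) (x y : R) : R := Derive (fun v => V M x v) y.

Definition Iq (x y vx vy : R) : R := (x ^ 2 - y ^ 2) / 2 * vx + x * y * vy.

Definition in_open (a b : Rbar) (t : R) : Prop := Rbar_lt a t /\ Rbar_lt t b.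

Definition zero_energy_solution (M : R -> R) (a b : Rbar) (x y : R -> R) : Prop :=
  forall t, in_open a b t ->
    ~ (x t = 0 /\ y t = 0) /\
    ex_derive x t /\ ex_derive y t /\
    ex_derive (Derive x) t /\ ex_derive (Derive y) t /\
    Derive (Derive x) t = - dVx M (x t) (y t) /\
    Derive (Derive y) t = - dVy M (x t) (y t) /\
    (Derive x t) ^ 2 + (Derive y t) ^ 2 + 2 * V M (x t) (y t) = 0.

(* Proof outline.
   1. Computing V_x and V_y explicitly shows the PDE
      (x^2-y^2)/2 V_x + x y V_y + 2 x V = 0 by field arithmetic.
   2. Along a solution, dI/dt = x (xdot^2 + ydot^2 + 2V) - (PDE expression),
      which vanishes at zero energy: I is a first integral.
   3. d/dt (x/r^2) = -2 I / r^4, so I = 0 makes x/r^2 a constant k <> 0 on the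
      time interval, i.e. the orbit lies on the circle r = c1 cos theta, c1 = 1/k.
   4. A continuous polar angle theta differs locally from atan(y/x) by a
      constant multiple of PI, hence theta' = (x ydot - y xdot)/r^2.
   5. On the circle, I = 0 and zero energy give
      (theta' cos^2 theta / sqrt(-2 M(tan theta / c1)))^2 = k^6; a continuous
      function with constant nonzero square is constant on the interval, and the
      substitution phi = theta(s) in the integral yields the quadrature. *)

From Stdlib Require Import Reals Lra Lia Psatz.
From Coquelicot Require Import Coquelicot.
Open Scope R_scope.

Lemma smooth_ex_derive (M : R -> R) : smooth M -> forall u, ex_derive M u.
Proof. intros HM u. exact (HM 1%nat u). Qed.

Lemma r2_pos (x y : R) : ~ (x = 0 /\ y = 0) -> 0 < r2 x y.
Proof.
  intros H. unfold r2.
  destruct (Req_dec x 0) as [Hx|Hx].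
  - assert (Hy : y <> 0) by tauto. pose proof (pow2_gt_0 y Hy). subst. lra.
  - pose proof (pow2_gt_0 x Hx). pose proof (pow2_ge_0 y). lra.
Qed.

Lemma dVx_eq (M : R -> R) (x y : R) : smooth M -> ~ (x = 0 /\ y = 0) ->
  dVx M x y = - 2 * x * y * Derive M (y / r2 x y) / (r2 x y) ^ 4
              - 4 * x * M (y / r2 x y) / (r2 x y) ^ 3.
Proof.
  intros HM H. pose proof (r2_pos x y H) as Hr.
  unfold dVx. apply is_derive_unique. unfold V, r2 in *.
  auto_derive.
  - repeat split; try apply smooth_ex_derive; auto; nra.
  - change (fun u => M u) with M.
    replace (y * / (x * (x * 1) + y * (y * 1))) with (y / (x ^ 2 + y ^ 2))
      by (unfold Rdiv; f_equal; f_equal; ring).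
    field. nra.
Qed.

Lemma dVy_eq (M : R -> R) (x y : R) : smooth M -> ~ (x = 0 /\ y = 0) ->
  dVy M x y = (x ^ 2 - y ^ 2) * Derive M (y / r2 x y) / (r2 x y) ^ 4
              - 4 * y * M (y / r2 x y) / (r2 x y) ^ 3.
Proof.
  intros HM H. pose proof (r2_pos x y H) as Hr.
  unfold dVy. apply is_derive_unique. unfold V, r2 in *.
  auto_derive.
  - repeat split; try apply smooth_ex_derive; auto; nra.
  - change (fun u => M u) with M.
    replace (y * / (x * (x * 1) + y * (y * 1))) with (y / (x ^ 2 + y ^ 2))
      by (unfold Rdiv; f_equal; f_equal; ring).
    field. nra.
Qed.

Lemma V_pde (M : R -> R) (x y : R) : smooth M -> ~ (x = 0 /\ y = 0) ->
  (x ^ 2 - y ^ 2) / 2 * dVx M x y + x * y * dVy M x y + 2 * x * V M x y = 0.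
Proof.
  intros HM H. pose proof (r2_pos x y H) as Hr.
  rewrite dVx_eq, dVy_eq by auto. unfold V, r2 in *. field. nra.
Qed.

(* I is conserved: its derivative is x * (energy) minus the PDE expression. *)
Lemma Iq_first_integral (M : R -> R) (a b : Rbar) (x y : R -> R) (t : R) :
  smooth M -> zero_energy_solution M a b x y -> in_open a b t ->
  is_derive (fun s => Iq (x s) (y s) (Derive x s) (Derive y s)) t 0.
Proof.
  intros HM Hs Ht.
  destruct (Hs t Ht) as (Hnz & Hx & Hy & Hx' & Hy' & Exx & Eyy & Energy).
  pose proof (V_pde M (x t) (y t) HM Hnz) as Pde.
  unfold Iq. auto_derive; [repeat split; auto|].
  change (fun s => x s) with x. change (fun s => y s) with y.
  change (fun s => Derive x s) with (Derive x).
  change (fun s => Derive y s) with (Derive y).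
  rewrite Exx, Eyy.
  transitivity (x t * (Derive x t ^ 2 + Derive y t ^ 2 + 2 * V M (x t) (y t))
    - ((x t ^ 2 - y t ^ 2) / 2 * dVx M (x t) (y t) + x t * y t * dVy M (x t) (y t)
       + 2 * x t * V M (x t) (y t))).
  - field.
  - rewrite Energy, Pde. ring.
Qed.

Lemma in_open_between (a b : Rbar) (t0 t s : R) :
  in_open a b t0 -> in_open a b t -> Rmin t0 t <= s <= Rmax t0 t -> in_open a b s.
Proof.
  intros [Ha0 Hb0] [Ha Hb] Hs. unfold Rmin, Rmax in Hs.
  destruct (Rle_dec t0 t); split.
  - apply Rbar_lt_le_trans with t0; auto. simpl; lra.
  - apply Rbar_le_lt_trans with t; auto. simpl; lra.
  - apply Rbar_lt_le_trans with t; auto. simpl; lra.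
  - apply Rbar_le_lt_trans with t0; auto. simpl; lra.
Qed.

Lemma in_open_locally (a b : Rbar) (t : R) : in_open a b t -> locally t (in_open a b).
Proof.
  intros [Ha Hb]. apply filter_and.
  - exact (open_Rbar_gt' (Finite t) a Ha).
  - exact (open_Rbar_lt' (Finite t) b Hb).
Qed.

Lemma derive_zero_const (a b : Rbar) (f : R -> R) :
  (forall t, in_open a b t -> is_derive f t 0) ->
  forall t0 t1, in_open a b t0 -> in_open a b t1 -> f t0 = f t1.
Proof.
  intros Hd t0 t1 H0 H1.
  assert (Hin : forall s, Rmin t0 t1 <= s <= Rmax t0 t1 -> in_open a b s)
    by (intros; apply (in_open_between a b t0 t1); auto).
  destruct (MVT_gen f t0 t1 (fun _ => 0)) as (c & _ & Hc).
  - intros s Hs. apply Hd, Hin. lra.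
  - intros s Hs. apply continuity_pt_filterlim.
    apply (ex_derive_continuous (K := R_AbsRing) (V := R_NormedModule)).
    exists 0. apply Hd, Hin. exact Hs.
  - lra.
Qed.

Lemma locally_constant_of_gap (g : R -> R) (s d : R) :
  continuous g s -> 0 < d ->
  locally s (fun u => g u = g s \/ d <= Rabs (g u - g s)) ->
  locally s (fun u => g u = g s).
Proof.
  intros Hc Hd Hgap.
  pose proof (proj1 (filterlim_locally g (g s)) Hc (mkposreal d Hd)) as Hnear.
  eapply filter_imp; [|exact (filter_and _ _ Hgap Hnear)].
  intros u [[E|Hfar] Hball]; [exact E|].
  change (Rabs (g u - g s) < d) in Hball. lra.
Qed.

Lemma PI_multiples_gap (m m' : Z) :
  IZR m' * PI = IZR m * PI \/ PI <= Rabs (IZR m' * PI - IZR m * PI).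
Proof.
  destruct (Z.eq_dec m' m) as [E|Ne]; [left; subst; reflexivity|right].
  pose proof PI_RGT_0.
  replace (IZR m' * PI - IZR m * PI) with (IZR (m' - m) * PI)
    by (rewrite minus_IZR; ring).
  rewrite Rabs_mult, (Rabs_right PI) by lra.
  assert (Hge : 1 <= Rabs (IZR (m' - m))).
  { destruct (Z.lt_ge_cases (m' - m) 0) as [Hlt|Hle].
    - assert (Hz : (m' - m <= -1)%Z) by lia. apply IZR_le in Hz.
      rewrite Rabs_left by lra. lra.
    - assert (Hz : (1 <= m' - m)%Z) by lia. apply IZR_le in Hz.
      rewrite Rabs_right by lra. lra. }
  nra.
Qed.

Lemma square_gap (p q K : R) :
  0 < K -> p ^ 2 = K ^ 2 -> q ^ 2 = K ^ 2 -> q = p \/ K <= Rabs (q - p).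
Proof.
  intros HK Hp Hq.
  assert (Hfact : (q - p) * (q + p) = 0) by (ring_simplify; lra).
  apply Rmult_integral in Hfact. destruct Hfact as [E|E]; [left; lra|right].
  assert (Habs : Rabs p = K).
  { assert (Rabs p ^ 2 = K ^ 2) by (rewrite pow2_abs; exact Hp).
    pose proof (Rabs_pos p). nra. }
  replace (q - p) with (-2 * p) by lra.
  rewrite Rabs_mult, Rabs_left by lra. lra.
Qed.

Lemma derive_x_over_r2 (x y : R -> R) (t : R) :
  ~ (x t = 0 /\ y t = 0) -> ex_derive x t -> ex_derive y t ->
  is_derive (fun s => x s / r2 (x s) (y s)) t
    (- 2 * Iq (x t) (y t) (Derive x t) (Derive y t) / (r2 (x t) (y t)) ^ 2).
Proof.
  intros Hnz Hx Hy. pose proof (r2_pos _ _ Hnz) as Hr.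
  unfold Iq, r2 in *. auto_derive; [repeat split; auto; nra|].
  change (fun s => x s) with x. change (fun s => y s) with y.
  field. nra.
Qed.

Lemma x_over_r2_const (M : R -> R) (a b : Rbar) (x y : R -> R) :
  zero_energy_solution M a b x y ->
  (forall t, in_open a b t -> Iq (x t) (y t) (Derive x t) (Derive y t) = 0) ->
  (exists t, in_open a b t /\ x t <> 0) ->
  exists k, k <> 0 /\ forall s, in_open a b s -> x s = k * r2 (x s) (y s).
Proof.
  intros Hs HI [ts [Hts Hxs]].
  assert (Hconst : forall t0 t1, in_open a b t0 -> in_open a b t1 ->
            x t0 / r2 (x t0) (y t0) = x t1 / r2 (x t1) (y t1)).
  { apply derive_zero_const. intros t Ht.
    destruct (Hs t Ht) as (Hnz & Hx & Hy & _).
    pose proof (derive_x_over_r2 x y t Hnz Hx Hy) as Hd.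
    rewrite HI in Hd by exact Ht.
    replace (-2 * 0 / r2 (x t) (y t) ^ 2) with 0 in Hd by (unfold Rdiv; ring).
    exact Hd. }
  exists (x ts / r2 (x ts) (y ts)). split.
  - destruct (Hs ts Hts) as (Hnz & _). pose proof (r2_pos _ _ Hnz).
    unfold Rdiv. apply Rmult_integral_contrapositive. split; auto.
    apply Rinv_neq_0_compat. lra.
  - intros s Hs'. rewrite <- (Hconst s ts Hs' Hts).
    destruct (Hs s Hs') as (Hnz & _). pose proof (r2_pos _ _ Hnz). field. lra.
Qed.

Lemma circle_of_ratio (k X Y : R) : k <> 0 -> X = k * r2 X Y ->
  (X - / k / 2) ^ 2 + Y ^ 2 = (/ k) ^ 2 / 4.
Proof.
  intros Hk0 HX. unfold r2 in HX.
  assert (E : X / k = X ^ 2 + Y ^ 2) by (rewrite HX at 1; field; auto).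
  transitivity (X ^ 2 + Y ^ 2 - X / k + (/ k) ^ 2 / 4); [field; auto|].
  rewrite E. ring.
Qed.

Lemma angular_momentum_sq (X Y vx vy : R) :
  (X * vy - Y * vx) ^ 2 = X ^ 2 * (vx ^ 2 + vy ^ 2) - 2 * vx * Iq X Y vx vy.
Proof. unfold Iq. field. Qed.

Section PolarAngle.
Variables (a b : Rbar) (x y theta : R -> R).
Hypothesis Hdx : forall s, in_open a b s -> ex_derive x s.
Hypothesis Hdy : forall s, in_open a b s -> ex_derive y s.
Hypothesis Hx : forall s, in_open a b s -> x s <> 0.
Hypothesis Hpolar : forall t, in_open a b t ->
  continuous theta t /\
  x t = sqrt (r2 (x t) (y t)) * cos (theta t) /\
  y t = sqrt (r2 (x t) (y t)) * sin (theta t).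

Definition angular_velocity (s : R) : R :=
  (x s * Derive y s - y s * Derive x s) / r2 (x s) (y s).

Lemma r2_pos_off_axis (s : R) : in_open a b s -> 0 < r2 (x s) (y s).
Proof. intros H. apply r2_pos. pose proof (Hx s H). tauto. Qed.

Lemma polar_cos_nz (s : R) : in_open a b s -> cos (theta s) <> 0.
Proof.
  intros H E. apply (Hx s H). destruct (Hpolar s H) as (_ & Hxc & _).
  rewrite Hxc, E. ring.
Qed.

Lemma sin_angle_offset (s : R) : in_open a b s -> sin (theta s - atan (y s / x s)) = 0.
Proof.
  intros H. pose proof (Hx s H) as Hxs. pose proof (polar_cos_nz s H) as Hc.
  destruct (Hpolar s H) as (_ & Hxc & Hys).
  assert (Hr : 0 < sqrt (r2 (x s) (y s))) by (apply sqrt_lt_R0, r2_pos_off_axis, H).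
  set (w := y s / x s).
  assert (Hw : w * cos (theta s) = sin (theta s)).
  { set (r := sqrt (r2 (x s) (y s))) in *. clearbody r.
    unfold w. rewrite Hxc, Hys. field. split; lra. }
  assert (0 < sqrt (1 + w²)) by (apply sqrt_lt_R0; pose proof (Rle_0_sqr w); lra).
  rewrite sin_minus, cos_atan, sin_atan, <- Hw. field. lra.
Qed.

(* By continuity and discreteness of PI Z, the offset is locally constant. *)
Lemma angle_offset_locally_const (s : R) : in_open a b s ->
  locally s (fun u => theta u - atan (y u / x u) = theta s - atan (y s / x s)).
Proof.
  intros H.
  apply (locally_constant_of_gap (fun u => theta u - atan (y u / x u)) s PI);
    [| exact PI_RGT_0 |].
  - apply (continuous_minus (K := R_AbsRing) (V := R_NormedModule)); [apply Hpolar, H|].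
    apply (ex_derive_continuous (K := R_AbsRing) (V := R_NormedModule)). pose proof (Hx s H).
    auto_derive. repeat split; auto.
  - eapply filter_imp; [|exact (in_open_locally a b s H)]. intros u Hu.
    destruct (sin_eq_0_0 _ (sin_angle_offset s H)) as [m Hm].
    destruct (sin_eq_0_0 _ (sin_angle_offset u Hu)) as [m' Hm'].
    rewrite Hm, Hm'. apply PI_multiples_gap.
Qed.

(* Locally theta = atan(y/x) + const, whose derivative is the angular velocity. *)
Lemma theta_derive (s : R) : in_open a b s -> is_derive theta s (angular_velocity s).
Proof.
  intros H. pose proof (Hx s H). pose proof (r2_pos_off_axis s H) as Hr.
  apply (is_derive_ext_loc (fun u => atan (y u / x u) + (theta s - atan (y s / x s)))).
  { eapply filter_imp; [|exact (angle_offset_locally_const s H)].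
    intros u Hu. simpl in Hu. lra. }
  unfold angular_velocity, r2 in *. auto_derive; [repeat split; auto|].
  change (fun u => x u) with x. change (fun u => y u) with y.
  field. repeat split; auto; lra.
Qed.

End PolarAngle.

Definition quadrature_integrand (M : R -> R) (c1 phi : R) : R :=
  (cos phi) ^ 2 / sqrt (- 2 * M (tan phi / c1)).

Section Quadrature.
Variables (M : R -> R) (a b : Rbar) (x y theta : R -> R) (k : R).
Hypothesis HM : smooth M.
Hypothesis Hs : zero_energy_solution M a b x y.
Hypothesis HI : forall t, in_open a b t -> Iq (x t) (y t) (Derive x t) (Derive y t) = 0.
Hypothesis Hk0 : k <> 0.
Hypothesis Hk : forall s, in_open a b s -> x s = k * r2 (x s) (y s).
Hypothesis HV : forall t, in_open a b t -> V M (x t) (y t) < 0.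
Hypothesis Hpolar : forall t, in_open a b t ->
  continuous theta t /\
  x t = sqrt (r2 (x t) (y t)) * cos (theta t) /\
  y t = sqrt (r2 (x t) (y t)) * sin (theta t).

Lemma circle_x_nz (s : R) : in_open a b s -> x s <> 0.
Proof.
  intros H. destruct (Hs s H) as (Hnz & _). pose proof (r2_pos _ _ Hnz).
  rewrite Hk by exact H. apply Rmult_integral_contrapositive. split; lra.
Qed.

Lemma circle_cos_nz (s : R) : in_open a b s -> cos (theta s) <> 0.
Proof. apply (polar_cos_nz a b x y theta circle_x_nz Hpolar). Qed.

Lemma circle_theta_derive (s : R) : in_open a b s ->
  is_derive theta s (angular_velocity x y s).
Proof.
  apply theta_derive; auto.
  - intros u Hu. apply (Hs u Hu).
  - intros u Hu. apply (Hs u Hu).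
  - exact circle_x_nz.
Qed.

Lemma angular_velocity_cont (s : R) : in_open a b s -> continuous (angular_velocity x y) s.
Proof.
  intros H. destruct (Hs s H) as (Hnz & Hx & Hy & Hx' & Hy' & _).
  pose proof (r2_pos _ _ Hnz) as Hr.
  apply (ex_derive_continuous (K := R_AbsRing) (V := R_NormedModule)).
  unfold angular_velocity, r2 in *. auto_derive. repeat split; auto; lra.
Qed.

(* On the circle, tan theta / c1 = y/r^2, so M(tan theta / c1) = V r^4 < 0. *)
Lemma M_along_circle (s : R) : in_open a b s ->
  M (tan (theta s) / / k) = V M (x s) (y s) * (r2 (x s) (y s)) ^ 2.
Proof.
  intros H. pose proof (circle_x_nz s H) as Hxs. pose proof (circle_cos_nz s H) as Hc.
  destruct (Hs s H) as (Hnz & _). pose proof (r2_pos _ _ Hnz) as Hr.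
  destruct (Hpolar s H) as (_ & Hxc & Hys). pose proof (Hk s H) as Hks.
  assert (Hsq : 0 < sqrt (r2 (x s) (y s))) by (apply sqrt_lt_R0; auto).
  assert (Htan : tan (theta s) / / k = y s / r2 (x s) (y s)).
  { set (R0 := r2 (x s) (y s)) in *. clearbody R0.
    set (r := sqrt R0) in *. clearbody r.
    replace R0 with (x s / k) by (rewrite Hks; field; auto).
    unfold tan. rewrite Hxc, Hys. field. repeat split; auto; lra. }
  rewrite Htan. unfold V. field. lra.
Qed.

Lemma M_along_circle_neg (s : R) : in_open a b s -> M (tan (theta s) / / k) < 0.
Proof.
  intros H. rewrite M_along_circle by exact H.
  destruct (Hs s H) as (Hnz & _). pose proof (r2_pos _ _ Hnz).
  pose proof (HV s H). assert (0 < r2 (x s) (y s) ^ 2) by (apply pow_lt; auto). nra.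
Qed.

Lemma integrand_cont (s : R) : in_open a b s ->
  continuous (quadrature_integrand M (/ k)) (theta s).
Proof.
  intros H. pose proof (M_along_circle_neg s H). pose proof (circle_cos_nz s H).
  apply (ex_derive_continuous (K := R_AbsRing) (V := R_NormedModule)).
  unfold quadrature_integrand. auto_derive.
  change (tan (theta s) * / / k) with (tan (theta s) / / k).
  repeat split.
  - apply smooth_ex_derive; auto.
  - unfold tan. auto_derive. auto.
  - lra.
  - apply Rgt_not_eq, sqrt_lt_R0. lra.
Qed.

(* theta' times the integrand at theta: the quadrature says it is +-1/c1^3. *)
Definition quadrature_rate (s : R) : R :=
  angular_velocity x y s * quadrature_integrand M (/ k) (theta s).

(* Zero energy and I = 0 give (x ydot - y xdot)^2 = -2 V x^2; combined with
   cos theta = x/r and M(tan theta / c1) = V r^4 this yields rate^2 = k^6. *)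
Lemma quadrature_rate_sq (s : R) : in_open a b s -> (quadrature_rate s) ^ 2 = k ^ 6.
Proof.
  intros H.
  destruct (Hs s H) as (Hnz & _ & _ & _ & _ & _ & _ & Energy).
  destruct (Hpolar s H) as (_ & Hxc & _).
  pose proof (r2_pos _ _ Hnz) as Hr. pose proof (M_along_circle_neg s H).
  assert (Hang : (x s * Derive y s - y s * Derive x s) ^ 2 = x s ^ 2 * (-2 * V M (x s) (y s)))
    by (rewrite angular_momentum_sq, (HI s H); nra).
  assert (Hc4 : cos (theta s) ^ 4 * r2 (x s) (y s) ^ 2 = x s ^ 4).
  { set (R0 := r2 (x s) (y s)) in *.
    replace (R0 ^ 2) with ((sqrt R0 * sqrt R0) ^ 2) by (rewrite sqrt_sqrt by lra; reflexivity).
    rewrite Hxc. ring. }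
  assert (HSS : sqrt (-2 * M (tan (theta s) / / k)) * sqrt (-2 * M (tan (theta s) / / k))
                = -2 * V M (x s) (y s) * r2 (x s) (y s) ^ 2).
  { rewrite sqrt_sqrt by lra. rewrite M_along_circle by exact H. ring. }
  assert (HS : 0 < sqrt (-2 * M (tan (theta s) / / k))) by (apply sqrt_lt_R0; lra).
  unfold quadrature_rate, angular_velocity, quadrature_integrand.
  set (S := sqrt (-2 * M (tan (theta s) / / k))) in *. clearbody S.
  transitivity ((x s * Derive y s - y s * Derive x s) ^ 2
                * (cos (theta s) ^ 4 * r2 (x s) (y s) ^ 2) / (r2 (x s) (y s) ^ 4 * (S * S))).
  - field. lra.
  - rewrite Hang, Hc4, HSS.
    pose proof (HV s H). pose proof (Hk s H) as Hks.
    set (V0 := V M (x s) (y s)) in *. set (R0 := r2 (x s) (y s)) in *.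
    clearbody V0 R0. rewrite Hks. field. split; lra.
Qed.

(* A continuous function with constant nonzero square is locally constant,
   hence has zero derivative. *)
Lemma quadrature_rate_derive (s : R) : in_open a b s -> is_derive quadrature_rate s 0.
Proof.
  intros H.
  assert (Hpos : 0 < Rabs k ^ 3) by (apply pow_lt, Rabs_pos_lt, Hk0).
  assert (Hsq : forall u, in_open a b u -> quadrature_rate u ^ 2 = (Rabs k ^ 3) ^ 2).
  { intros u Hu. rewrite quadrature_rate_sq by exact Hu.
    replace ((Rabs k ^ 3) ^ 2) with ((Rabs k ^ 2) ^ 3) by ring.
    rewrite pow2_abs. ring. }
  assert (Hloc : locally s (fun u => quadrature_rate u = quadrature_rate s)).
  { apply (locally_constant_of_gap _ s (Rabs k ^ 3)); [| exact Hpos |].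
    - apply (continuous_mult (K := R_AbsRing)); [apply angular_velocity_cont, H|].
      apply (continuous_comp theta); [apply Hpolar, H | apply integrand_cont, H].
    - eapply filter_imp; [|exact (in_open_locally a b s H)]. intros u Hu.
      apply square_gap; auto. }
  eapply is_derive_ext_loc.
  { eapply filter_imp; [|exact Hloc]. intros u Hu. symmetry. exact Hu. }
  exact (is_derive_const (K := R_AbsRing) (V := R_NormedModule) (quadrature_rate s) s).
Qed.

(* Change of variables phi = theta(s) with the constant rate. *)
Lemma quadrature (ts : R) : in_open a b ts ->
  exists eps : R, (eps = 1 \/ eps = -1) /\
    forall t0 t, in_open a b t0 -> in_open a b t ->
      t - t0 = eps * (/ k) ^ 3 *
        RInt (quadrature_integrand M (/ k)) (theta t0) (theta t).
Proof.
  intros Hts. exists ((/ k) ^ 3 * quadrature_rate ts).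
  assert (Heps : ((/ k) ^ 3 * quadrature_rate ts) ^ 2 = 1).
  { replace (((/ k) ^ 3 * quadrature_rate ts) ^ 2)
      with ((/ k) ^ 6 * quadrature_rate ts ^ 2) by ring.
    rewrite quadrature_rate_sq by exact Hts. field. exact Hk0. }
  split.
  - assert (Hf : ((/ k) ^ 3 * quadrature_rate ts - 1) * ((/ k) ^ 3 * quadrature_rate ts + 1) = 0)
      by (ring_simplify; lra).
    apply Rmult_integral in Hf. lra.
  - intros t0 t H0 H1.
    assert (Hin : forall u, Rmin t0 t <= u <= Rmax t0 t -> in_open a b u)
      by (intros; apply (in_open_between a b t0 t); auto).
    rewrite <- (RInt_comp _ theta (angular_velocity x y)).
    + rewrite (RInt_ext _ (fun _ => quadrature_rate ts)).
      * rewrite RInt_const. change (scal (t - t0) (quadrature_rate ts))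
          with ((t - t0) * quadrature_rate ts).
        transitivity (((/ k) ^ 3 * quadrature_rate ts) ^ 2 * (t - t0)); [rewrite Heps|]; ring.
      * intros u Hu. apply (derive_zero_const a b _ quadrature_rate_derive); auto.
        apply Hin. lra.
    + intros u Hu. apply integrand_cont, Hin, Hu.
    + intros u Hu. split; [apply circle_theta_derive | apply angular_velocity_cont];
        apply Hin, Hu.
Qed.

End Quadrature.

Theorem mainTheorem7 (M : R -> R) (HM : smooth M) :
  (forall x y : R, ~ (x = 0 /\ y = 0) ->
     (x ^ 2 - y ^ 2) / 2 * dVx M x y + x * y * dVy M x y + 2 * x * V M x y = 0)
  /\
  (forall (a b : Rbar) (x y : R -> R),
     zero_energy_solution M a b x y ->
     (forall t, in_open a b t ->
        is_derive (fun s => Iq (x s) (y s) (Derive x s) (Derive y s)) t 0)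
     /\
     ((forall t, in_open a b t -> Iq (x t) (y t) (Derive x t) (Derive y t) = 0) ->
      (exists t, in_open a b t /\ x t <> 0) ->
      exists c1 : R, c1 <> 0 /\
        (forall t, in_open a b t -> (x t - c1 / 2) ^ 2 + (y t) ^ 2 = c1 ^ 2 / 4) /\
        ((forall t, in_open a b t -> V M (x t) (y t) < 0) ->
         forall theta : R -> R,
           (forall t, in_open a b t ->
              continuous theta t /\
              x t = sqrt (r2 (x t) (y t)) * cos (theta t) /\
              y t = sqrt (r2 (x t) (y t)) * sin (theta t)) ->
           exists eps : R, (eps = 1 \/ eps = -1) /\
             forall t0 t, in_open a b t0 -> in_open a b t ->
               t - t0 = eps * c1 ^ 3 *
                 RInt (fun phi => (cos phi) ^ 2 / sqrt (- 2 * M (tan phi / c1)))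
                      (theta t0) (theta t)))).
Proof.
  split; [intros x y; apply V_pde, HM|].
  intros a b x y Hs. split; [intros t; exact (Iq_first_integral M a b x y t HM Hs)|].
  intros HI Hex.
  destruct (x_over_r2_const M a b x y Hs HI Hex) as [k [Hk0 Hk]].
  exists (/ k). split; [apply Rinv_neq_0_compat, Hk0|]. split.
  - intros t Ht. apply circle_of_ratio; auto.
  - intros HV theta Hpolar. destruct Hex as [ts [Hts _]].
    exact (quadrature M a b x y theta k HM Hs HI Hk0 Hk HV Hpolar ts Hts).
Qed.
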